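(* Let $R$ be a commutative multiplicative hyperring with identity $1$ having the zero absorbing property, let $\alpha$ be a good endomorphism of $R$, and let $A$ be a hyperideal of $R$. Then: (1) if $\alpha(1)=1$, then $\sqrt[\alpha]{A}=R$ if and only if $A=R$; (2) if $A$ is $\alpha$-prime, then $\sqrt[\alpha]{A^n}=\sqrt[\alpha]{A}$ for all $n\in\mathbb N$.
   Context: A multiplicative hyperring is an abelian group $(R,+)$ with a hyperoperation $\circ:R\times R\to \mathcal P^*(R)$ (nonempty subsets) such that $a\circ(b\circ c)=(a\circ b)\circ c$, $a\circ(b+c)\subseteq a\circ b+a\circ c$, $(b+c)\circ a\subseteq b\circ a+c\circ a$, and $a\circ(-b)=(-a)\circ b=-(a\circ b)$. Products of subsets are unions of elementwise products; for an element or subset $X$, $X^n=X\circ\cdots\circ X$ ($n$ factors). Commutative means $a\circ b=b\circ a$. An identity $1$ satisfies $a\in1\circ a$ for all $a$. $R$ has the zero absorbing property if $0\circ r=r\circ0=\{0\}$ for all $r$. A hyperideal is a nonempty $I$ closed under subtraction with $r\circ x\subseteq I$ for $r\in R$, $x\in I$. Standing assumption: all hyperideals are $\mathbf C$-hyperideals, i.e. for every finite product $A=r_1\circ\cdots\circ r_n$, $A\cap I\ne\emptyset$ implies $A\subseteq I$. A good endomorphism $\alpha$ satisfies $\alpha(x+y)=\alpha(x)+\alpha(y)$ and $\alpha(x\circ y)=\alpha(x)\circ\alpha(y)$; it is applied to sets elementwise. The $\alpha$-radical is $\sqrt[\alpha]{J}=\{r\in R:\alpha(r^n)\subseteq J\text{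 for some }n\in\mathbb N\}$. A hyperideal $I$ is $\alpha$-prime if for all $x,y$, $x\circ y\subseteq I$ implies $x\in I$ or $\alpha(y)\in I$. *)

From mathcomp Require Import all_boot all_algebra.
Set Implicit Arguments. Unset Strict Implicit. Unset Printing Implicit Defensive.
Import GRing.Theory.
Local Open Scope ring_scope.

Definition hset (T : Type) := T -> Prop.

Section Hyper.
Variable R : zmodType.
Variable hm : R -> R -> hset R.

Definition hsubset (X Y : hset R) : Prop := forall x, X x -> Y x.
Definition hseteq (X Y : hset R) : Prop := forall x, X x <-> Y x.
Definition hsingle (a : R) : hset R := fun x => x = a.
Definition hfull : hset R := fun _ => True.

Definition hsetprod (X Y : hset R) : hset R :=
  fun z => exists x y, X x /\ Y y /\ hm x y z.
Definition hsetadd (X Y : hset R) : hset R :=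
  fun z => exists x y, X x /\ Y y /\ z = x + y.
Definition hsetopp (X : hset R) : hset R := fun z => X (- z).

(* X^n = X ∘ ... ∘ X (n factors); only meaningful for n >= 1
   (all uses below require 0 < n; hpow X 0 is never used). *)
Fixpoint hpow (X : hset R) (n : nat) : hset R :=
  match n with
  | 0 => X
  | 1 => X
  | m.+1 => hsetprod X (hpow X m)
  end.

(* r_1 ∘ ... ∘ r_n for a nonempty list r :: rs *)
Fixpoint hprod (r : R) (rs : seq R) : hset R :=
  match rs with
  | [::] => hsingle r
  | s :: rs' => hsetprod (hsingle r) (hprod s rs')
  end.

Definition is_mhyperring : Prop :=
  (forall a b, exists z, hm a b z) /\
  (forall a b c, hseteq (hsetprod (hsingle a) (hm b c))
                        (hsetprod (hm a b) (hsingle c))) /\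
  (forall a b c, hsubset (hm a (b + c)) (hsetadd (hm a b) (hm a c))) /\
  (forall a b c, hsubset (hm (b + c) a) (hsetadd (hm b a) (hm c a))) /\
  (forall a b, hseteq (hm a (- b)) (hsetopp (hm a b))) /\
  (forall a b, hseteq (hm (- a) b) (hsetopp (hm a b))).

Definition hcommutative : Prop := forall a b, hseteq (hm a b) (hm b a).

Definition hidentity (one : R) : Prop := forall a, hm one a a.

Definition zero_absorbing : Prop :=
  forall r, hseteq (hm 0 r) (hsingle 0) /\ hseteq (hm r 0) (hsingle 0).

Definition hyperideal (I : hset R) : Prop :=
  (exists x, I x) /\
  (forall x y, I x -> I y -> I (x - y)) /\
  (forall r x, I x -> hsubset (hm r x) I).

Definition C_hyperideal (I : hset R) : Prop :=
  forall r rs, (exists z, hprod r rs z /\ I z) -> hsubset (hprod r rs) I.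

Definition all_hyperideals_C : Prop :=
  forall I, hyperideal I -> C_hyperideal I.

Definition himage (f : R -> R) (X : hset R) : hset R :=
  fun z => exists x, X x /\ z = f x.

Definition good_endo (alpha : R -> R) : Prop :=
  (forall x y, alpha (x + y) = alpha x + alpha y) /\
  (forall x y, hseteq (himage alpha (hm x y)) (hm (alpha x) (alpha y))).

Definition alpha_radical (alpha : R -> R) (J : hset R) : hset R :=
  fun r => exists n, (0 < n)%N /\ hsubset (himage alpha (hpow (hsingle r) n)) J.

Definition alpha_prime (alpha : R -> R) (I : hset R) : Prop :=
  hyperideal I /\
  forall x y, hsubset (hm x y) I -> I x \/ I (alpha y).

End Hyper.

(* Since A is absorbing, A^n ⊆ A; conversely, if
   α(r^m) ⊆ A then r^(mn) ⊆ (r^m)^n by associativity, and α, being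
   multiplicative, maps (r^m)^n into α(r^m)^n ⊆ A^n.  For (1), 1 ∈ 1^n, so
   1 ∈ √[α]A forces α(1) = 1 ∈ A, and a hyperideal containing 1 is all of R. *)
From mathcomp Require Import all_boot all_algebra.
Set Implicit Arguments. Unset Strict Implicit. Unset Printing Implicit Defensive.
Local Open Scope ring_scope.

Section HyperProducts.
Variable R : zmodType.
Variable hm : R -> R -> hset R.

Lemma hsetprod_subset (X X' Y Y' : hset R) :
  hsubset X X' -> hsubset Y Y' ->
  hsubset (hsetprod hm X Y) (hsetprod hm X' Y').
Proof. by move=> sXX' sYY' z [x [y [Xx [Yy xyz]]]]; exists x, y; auto. Qed.

Lemma hpowS (X : hset R) k :
  (0 < k)%N -> hpow hm X k.+1 = hsetprod hm X (hpow hm X k).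
Proof. by case: k. Qed.

Lemma hpow_subset (X Y : hset R) n :
  hsubset X Y -> hsubset (hpow hm X n) (hpow hm Y n).
Proof.
move=> sXY; elim: n => [|[|n] IH] //.
exact: hsetprod_subset sXY IH.
Qed.

Hypothesis hm_assoc : forall a b c,
  hseteq (hsetprod hm (hsingle a) (hm b c)) (hsetprod hm (hm a b) (hsingle c)).

Lemma hsetprodA_subset (X Y Z : hset R) :
  hsubset (hsetprod hm X (hsetprod hm Y Z)) (hsetprod hm (hsetprod hm X Y) Z).
Proof.
move=> z [a [w [Xa [[b [c [Yb [Zc bcw]]]] awz]]]].
have : hsetprod hm (hsingle a) (hm b c) z by exists a, w.
case/hm_assoc => [u [_ [abu [-> ucz]]]].
by exists u, c; do !split => //; exists a, b.
Qed.

Lemma hpowD_subset (X : hset R) a b : (0 < a)%N -> (0 < b)%N ->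
  hsubset (hpow hm X (a + b)) (hsetprod hm (hpow hm X a) (hpow hm X b)).
Proof.
move=> + b_gt0; elim: a => [//|[|a] IH] _; first by rewrite add1n hpowS.
rewrite addSn hpowS ?addn_gt0 // => z Xz; apply: hsetprodA_subset.
exact: hsetprod_subset _ (IH isT) z Xz.
Qed.

Lemma hpowM_subset (X : hset R) m n : (0 < m)%N -> (0 < n)%N ->
  hsubset (hpow hm X (m * n)) (hpow hm (hpow hm X m) n).
Proof.
move=> m_gt0; elim: n => [//|[|n] IH] _; first by rewrite muln1.
have mn_gt0 : (0 < m * n.+1)%N by rewrite muln_gt0 m_gt0.
rewrite mulnS => z /(hpowD_subset m_gt0 mn_gt0) Xz.
exact: hsetprod_subset _ (IH isT) z Xz.
Qed.

End HyperProducts.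

Lemma hpow_hsingle_one (R : zmodType) (hm : R -> R -> hset R) one n :
  hidentity hm one -> hpow hm (hsingle one) n one.
Proof. by move=> hm_one; elim: n => [|[|n] IH] //; exists one, one. Qed.

Section GoodEndomorphism.
Variable R : zmodType.
Variable hm : R -> R -> hset R.
Variable alpha : R -> R.
Hypothesis alpha_hm : forall x y,
  hseteq (himage alpha (hm x y)) (hm (alpha x) (alpha y)).

Lemma himage_subset (X Y : hset R) :
  hsubset X Y -> hsubset (himage alpha X) (himage alpha Y).
Proof. by move=> sXY _ [x [Xx ->]]; exists x; split; first exact: sXY. Qed.

Lemma himage_hsetprod (X Y : hset R) :
  hsubset (himage alpha (hsetprod hm X Y))
          (hsetprod hm (himage alpha X) (himage alpha Y)).
Proof.
move=> _ [z [[x [y [Xx [Yy xyz]]]] ->]].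
exists (alpha x), (alpha y); do !split; [by exists x | by exists y |].
by apply/alpha_hm; exists z.
Qed.

Lemma himage_hpow (X : hset R) n :
  hsubset (himage alpha (hpow hm X n)) (hpow hm (himage alpha X) n).
Proof.
elim: n => [|[|n] IH] // z /himage_hsetprod.
exact: hsetprod_subset.
Qed.

Lemma alpha_radical_subset (J K : hset R) :
  hsubset J K -> hsubset (alpha_radical hm alpha J) (alpha_radical hm alpha K).
Proof. by move=> sJK r [n [n_gt0 sJ]]; exists n; split => // z /sJ /sJK. Qed.

Hypothesis hm_assoc : forall a b c,
  hseteq (hsetprod hm (hsingle a) (hm b c)) (hsetprod hm (hm a b) (hsingle c)).

Lemma alpha_radical_hpow (J : hset R) n : (0 < n)%N ->
  hsubset (alpha_radical hm alpha J) (alpha_radical hm alpha (hpow hm J n)).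
Proof.
move=> n_gt0 r [m [m_gt0 sJ]]; exists (m * n)%N; split; first by rewrite muln_gt0 m_gt0.
move=> z /(himage_subset (hpowM_subset hm_assoc m_gt0 n_gt0)) /himage_hpow.
exact: hpow_subset.
Qed.

End GoodEndomorphism.

Section Hyperideals.
Variable R : zmodType.
Variable hm : R -> R -> hset R.
Hypothesis hm_comm : hcommutative hm.
Variable I : hset R.
Hypothesis hm_absorb : forall r x, I x -> hsubset (hm r x) I.

Lemma hyperideal_hm_subl x y : I x -> hsubset (hm x y) I.
Proof. by move=> Ix z /hm_comm; apply: hm_absorb. Qed.

Lemma hpow_hyperideal_subset n : hsubset (hpow hm I n) I.
Proof.
case: n => [|[|n]] // z [x [y [Ix [_]]]].
exact: hyperideal_hm_subl.
Qed.

Variable one : R.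
Hypothesis hm_one : hidentity hm one.

Lemma hyperideal_full_of_one : I one -> hseteq I (@hfull R).
Proof. by move=> Ione a; split=> // _; apply: (hyperideal_hm_subl (y := a) Ione). Qed.

End Hyperideals.

Theorem mainTheorem14 (R : zmodType) (hm : R -> R -> hset R) (one : R)
  (alpha : R -> R) (A : hset R) :
  is_mhyperring hm -> hcommutative hm -> hidentity hm one ->
  zero_absorbing hm -> all_hyperideals_C hm ->
  good_endo hm alpha -> hyperideal hm A ->
  (alpha one = one ->
     (hseteq (alpha_radical hm alpha A) (@hfull R) <-> hseteq A (@hfull R))) /\
  (alpha_prime hm alpha A ->
     forall n : nat, (0 < n)%N ->
       hseteq (alpha_radical hm alpha (hpow hm A n)) (alpha_radical hm alpha A)).
Proof.
move=> [_ [hm_assoc _]] hm_comm hm_one _ _ [_ alpha_hm] [_ [_ A_absorb]].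
split=> [alpha1 | _ n n_gt0 r]; last first.
  split; first by apply: alpha_radical_subset; exact: hpow_hyperideal_subset.
  by apply: alpha_radical_hpow.
split=> [rad_full | A_full r]; last by split=> // _; exists 1%N; split=> // z _; apply/A_full.
apply: (hyperideal_full_of_one hm_comm A_absorb hm_one).
have [m [_ sA]] := proj2 (rad_full one) I.
by rewrite -alpha1; apply: sA; exists one; split; first exact: hpow_hsingle_one.
Qed.
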